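(* Let $G$ be a finite, simple, connected graph and let $v \in V(G)$ be a vertex that is not a cut vertex of $G$. Then $$\chi_{dd}(G)-1 \leq \chi_{dd}(G-v) \leq \chi_{dd}(G)+\deg(v)-1,$$ where $G-v$ is the graph obtained from $G$ by deleting $v$ and all edges incident with $v$, and $\deg(v)$ is the degree of $v$ in $G$.
   Context: All graphs are finite, undirected and simple. For a vertex $w$, $N(w)$ is its open neighborhood and $N[w]=N(w)\cup\{w\}$ its closed neighborhood. A vertex $w$ dominates a set $S$ of vertices if $S \subseteq N[w]$. A domination coloring of a graph $H$ is a proper vertex coloring of $H$ (adjacent vertices receive different colors; a color class is the set of all vertices receiving a given color) such that every vertex of $H$ dominates at least one color class (possibly its own class), and every color class is dominated by at least one vertex of $H$. The domination chromatic number $\chi_{dd}(H)$ is the minimum number of color classes in a domination coloring of $H$. *)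

From mathcomp Require Import all_boot.
Set Implicit Arguments. Unset Strict Implicit. Unset Printing Implicit Defensive.

Definition simple_graph (T : finType) (e : rel T) : Prop :=
  symmetric e /\ irreflexive e.

Definition cnbhd (T : finType) (e : rel T) (w : T) : {set T} :=
  [set u | (u == w) || e w u].

Definition deg (T : finType) (e : rel T) (v : T) : nat := #|[set u | e v u]|.

Definition connected_graph (T : finType) (e : rel T) : Prop :=
  forall x y : T, connect e x y.

Definition del_vertex_type (T : finType) (v : T) : finType := {x : T | x != v}.
Definition del_vertex (T : finType) (e : rel T) (v : T) : rel (del_vertex_type v) :=
  fun x y => e (val x) (val y).

(* v is a cut vertex: deleting v increases the number of components, i.e. some two
   vertices other than v connected in G are disconnected in G - v *)
Definition cut_vertex (T : finType) (e : rel T) (v : T) : Prop :=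
  exists x y : del_vertex_type v,
    connect e (val x) (val y) /\ ~~ connect (@del_vertex T e v) x y.

(* A domination coloring given by its set P of color classes: P partitions V,
   each class is independent (proper coloring), every vertex dominates some class,
   every class is dominated by some vertex. *)
Definition dom_coloring (T : finType) (e : rel T) (P : {set {set T}}) : bool :=
  [&& partition P [set: T],
      [forall A in P, forall x in A, forall y in A, ~~ e x y],
      [forall w : T, exists A in P, A \subset cnbhd e w] &
      [forall A in P, exists w : T, A \subset cnbhd e w]].

(* domination chromatic number: minimum number of color classes.
   (The singleton partition is a domination coloring with #|T| classes,
   so the default value #|T| of the min does not affect the result.) *)
Definition chi_dd (T : finType) (e : rel T) : nat :=
  \big[minn/#|T|]_(P : {set {set T}} | dom_coloring e P) #|P|.

(* Lower bound: an optimal domination coloring of G - v, extended by the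
   new class {v}, is a domination coloring of G.
   Upper bound: restrict an optimal domination coloring f of G to G - v.
   Two things can break: a class whose only dominator was v (such a class
   lies in N(v)), and a neighbour of v whose only dominated class was {v}.
   Both are repaired by giving a fresh singleton color to every neighbour of
   v whose class lies in N(v), or to every neighbour of v if {v} is a class.
   This adds at most deg v colors.  If {v} is a class or some vertex is
   recolored, an old color disappears: that of {v}, resp. of the recolored
   class.  Otherwise no color is added, and deg v >= 1: the class of v is
   not {v}, so the vertex dominating it is a neighbour of v. *)

From mathcomp Require Import all_boot order zify.
Set Implicit Arguments. Unset Strict Implicit. Unset Printing Implicit Defensive.
Import Order.TTheory.

Section DominationColoringMap.
Variables (T K : finType) (e : rel T).

Definition dominates_color (f : T -> K) (w : T) (c : K) : Prop :=
  forall z, f z = c -> z \in cnbhd e w.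

Definition dom_coloring_map (f : T -> K) : Prop :=
  [/\ forall x y, e x y -> f x != f y,
      forall w, exists y, dominates_color f w (f y) &
      forall y, exists w, dominates_color f w (f y)].

Lemma dom_coloring_preim f :
  dom_coloring_map f -> dom_coloring e (preim_partition f [set: T]).
Proof.
case=> proper_f dom_vertex dom_class.
have class_mem y : [set z | f z == f y] \in preim_partition f [set: T].
  by apply/imsetP; exists y => //; apply/setP=> z; rewrite !inE eq_sym.
have classE A : A \in preim_partition f [set: T] -> exists y, A = [set z | f z == f y].
  by case/imsetP=> y _ ->; exists y; apply/setP=> z; rewrite !inE eq_sym.
have class_sub w y : dominates_color f w (f y) -> [set z | f z == f y] \subset cnbhd e w.
  by move=> dom; apply/subsetP=> z; rewrite inE => /eqP /dom.
apply/and4P; split; first exact: preim_partitionP.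
- apply/forall_inP=> A /classE [y ->]; apply/forall_inP=> x; rewrite inE => /eqP fx.
  apply/forall_inP=> z; rewrite inE => /eqP fz; apply/negP=> /proper_f.
  by rewrite fx fz eqxx.
- apply/forallP=> w; have [y dom] := dom_vertex w.
  by apply/exists_inP; exists [set z | f z == f y]; [exact: class_mem | exact: class_sub].
- apply/forall_inP=> A /classE [y ->]; have [w dom] := dom_class y.
  by apply/existsP; exists w; exact: class_sub.
Qed.

End DominationColoringMap.

Lemma card_preim_partition (T K : finType) (f : T -> K) (D : {set T}) :
  #|preim_partition f D| = #|f @: D|.
Proof.
have -> : preim_partition f D = (fun c => [set y in D | f y == c]) @: (f @: D).
  by rewrite -imset_comp; apply: eq_imset => x /=; apply/setP=> y; rewrite !inE eq_sym.
rewrite card_in_imset // => _ _ /imsetP [x Dx ->] /imsetP [y Dy ->] /setP /(_ x).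
by rewrite !inE Dx eqxx => /esym /eqP.
Qed.

Section ChiDd.
Variables (T : finType) (e : rel T).

Lemma chi_dd_le_card P : dom_coloring e P -> chi_dd e <= #|P|.
Proof.
move=> dom_P; rewrite /chi_dd.
exact: (bigmin_le_cond (P := dom_coloring e) _ (fun P => #|P|) dom_P).
Qed.

Lemma leq_chi_dd m :
  m <= #|T| -> (forall P, dom_coloring e P -> m <= #|P|) -> m <= chi_dd e.
Proof. by move=> mT mP; apply/(@bigmin_geP _ nat _ _ _ (dom_coloring e) (fun P => #|P|)). Qed.

Lemma chi_dd_le_colors (K : finType) (f : T -> K) :
  dom_coloring_map e f -> chi_dd e <= #|f @: [set: T]|.
Proof. by move/dom_coloring_preim/chi_dd_le_card; rewrite card_preim_partition. Qed.

Lemma dom_coloring_pblock P : dom_coloring e P -> dom_coloring_map e (pblock P).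
Proof.
case/and4P=> partP /forall_inP indep /forallP dom_vertex /forall_inP dom_class.
have [/eqP coverP trivP set0P] := and3P partP.
have mem_block x : x \in pblock P x by rewrite mem_pblock coverP inE.
have block_mem x : pblock P x \in P by rewrite pblock_mem ?coverP ?inE.
have dom_block w y :
    pblock P y \subset cnbhd e w -> dominates_color e (pblock P) w (pblock P y).
  by move=> sub z eq_zy; apply: (subsetP sub); rewrite -eq_zy mem_block.
split.
- move=> x y exy; apply/eqP=> eq_xy.
  have /forall_inP/(_ x (mem_block x))/forall_inP/(_ y) := indep _ (block_mem x).
  by rewrite eq_xy mem_block exy => /(_ isT).
- move=> w; have /exists_inP [A PA subA] := dom_vertex w.
  have /set0Pn [y Ay] : A != set0 by apply: contraNneq set0P => <-.
  by exists y; apply: dom_block; rewrite (def_pblock trivP PA Ay).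
- move=> y; have /existsP [w subw] := dom_class _ (block_mem y).
  by exists w; apply: dom_block.
Qed.

Lemma dom_coloring_set1 : irreflexive e -> dom_coloring_map e (@set1 T).
Proof.
move=> irr; split.
- by move=> x y; apply: contraTneq => /set1_inj ->; rewrite irr.
- by move=> w; exists w => z /set1_inj ->; rewrite inE eqxx.
- by move=> y; exists y => z /set1_inj ->; rewrite inE eqxx.
Qed.

Lemma chi_dd_attained : irreflexive e ->
  exists f : T -> {set T}, dom_coloring_map e f /\ chi_dd e = #|f @: [set: T]|.
Proof.
move=> irr; have dom_set1 := dom_coloring_preim (dom_coloring_set1 irr).
case: (arg_minnP (fun P : {set {set T}} => #|P|) dom_set1) => P dom_P min_P.
exists (pblock P); split; first exact: dom_coloring_pblock.
have partP : partition P [set: T] by case/and4P: dom_P.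
rewrite -card_preim_partition preim_partition_pblock //.
apply/eqP; rewrite eqn_leq chi_dd_le_card //=; apply: leq_chi_dd => //.
have := min_P _ dom_set1; rewrite card_preim_partition card_imset ?cardsT //.
exact: set1_inj.
Qed.

End ChiDd.

Section DeleteVertex.
Variables (T : finType) (e : rel T) (v : T).
Local Notation T' := (del_vertex_type v).
Local Notation e' := (@del_vertex T e v).

Lemma del_vertex_irreflexive : irreflexive e -> irreflexive e'.
Proof. by move=> irr x; exact: irr. Qed.

Lemma cnbhd_del_vertex (w z : T') : (z \in cnbhd e' w) = (val z \in cnbhd e (val w)).
Proof. by rewrite !inE val_eqE. Qed.

Lemma eq_or_val (x : T) : x = v \/ exists x' : T', x = val x'.
Proof. by case: (eqVneq x v) => [|neq_xv]; [left | right; exists (exist _ x neq_xv)]. Qed.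

Section ExtendColoring.
Variables (K : finType) (f : T' -> K).

Definition extend_coloring (x : T) : option K := omap f (insub x).

Lemma extend_coloring_v : extend_coloring v = None.
Proof. by rewrite /extend_coloring insubF //= eqxx. Qed.

Lemma extend_coloring_val x' : extend_coloring (val x') = Some (f x').
Proof. by rewrite /extend_coloring valK. Qed.

Lemma dom_coloring_extend :
  irreflexive e -> dom_coloring_map e' f -> dom_coloring_map e extend_coloring.
Proof.
move=> irr [proper_f dom_vertex dom_class].
have dom_v : dominates_color e extend_coloring v None.
  move=> z; case: (eq_or_val z) => [-> _|[z' ->]]; first by rewrite inE eqxx.
  by rewrite extend_coloring_val.
have dom_val w' y' : dominates_color e' f w' (f y') ->
    dominates_color e extend_coloring (val w') (Some (f y')).
  move=> dom z; case: (eq_or_val z) => [->|[z' ->]]; first by rewrite extend_coloring_v.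
  by rewrite extend_coloring_val -cnbhd_del_vertex => [[/dom]].
split.
- move=> x y; case: (eq_or_val x) => [->|[x' ->]]; case: (eq_or_val y) => [->|[y' ->]];
    rewrite ?extend_coloring_v ?extend_coloring_val ?irr //.
  by move/proper_f.
- move=> w; case: (eq_or_val w) => [->|[w' ->]]; first by exists v; rewrite extend_coloring_v.
  have [y' dom] := dom_vertex w'.
  by exists (val y'); rewrite extend_coloring_val; exact: dom_val.
- move=> y; case: (eq_or_val y) => [->|[y' ->]]; first by exists v; rewrite extend_coloring_v.
  have [w' dom] := dom_class y'.
  by exists (val w'); rewrite extend_coloring_val; exact: dom_val.
Qed.

Lemma card_extend_coloring : #|extend_coloring @: [set: T]| <= #|f @: [set: T']|.+1.
Proof.
have sub : extend_coloring @: [set: T] \subset None |: (Some @: (f @: [set: T'])).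
  apply/subsetP=> _ /imsetP [x _ ->]; case: (eq_or_val x) => [->|[x' ->]].
    by rewrite extend_coloring_v setU11.
  by rewrite extend_coloring_val setU1r // !imset_f.
apply: leq_trans (subset_leq_card sub) _.
by rewrite cardsU1 card_imset; [case: (_ \notin _) | exact: Some_inj].
Qed.

End ExtendColoring.

Lemma chi_dd_le_del_vertex_succ : irreflexive e -> chi_dd e <= (chi_dd e').+1.
Proof.
move=> irr; have [f [dom_f ->]] := chi_dd_attained (del_vertex_irreflexive irr).
exact: leq_trans (chi_dd_le_colors (dom_coloring_extend irr dom_f)) (card_extend_coloring f).
Qed.

Section RestrictColoring.
Hypothesis sym_e : symmetric e.
Variables (K : finType) (f : T -> K).
Hypothesis dom_f : dom_coloring_map e f.

Definition v_class_singleton := [forall z, (f z == f v) ==> (z == v)].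

Definition class_in_nbhd (x : T) := [forall z, (f z == f x) ==> e v z].

Definition recolored (x : T) := e v x && (class_in_nbhd x || v_class_singleton).

Definition restrict_coloring (y : T') : T + K :=
  if recolored (val y) then inl (val y) else inr (f (val y)).

Lemma restrict_coloring_eq y z :
  restrict_coloring z = restrict_coloring y -> f (val z) = f (val y).
Proof.
rewrite /restrict_coloring; case: ifP => _; case: ifP => _ //.
- by case=> /val_inj ->.
- by case=> ->.
Qed.

Lemma restrict_coloring_recolored y z : recolored (val y) ->
  restrict_coloring z = restrict_coloring y -> z = y.
Proof.
move=> rec_y; rewrite {2}/restrict_coloring rec_y /restrict_coloring.
by case: ifP => // _ [/val_inj].
Qed.

Lemma deg_gt0_of_nonsingleton : ~~ v_class_singleton -> 0 < deg e v.
Proof.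
case: dom_f => _ _ /(_ v) [w dom_w]; apply: contraNT; rewrite lt0n negbK cards_eq0.
move=> /eqP no_nbr; have {}no_nbr u : e v u = false.
  by have /setP/(_ u) := no_nbr; rewrite !inE.
have wv : w = v.
  by have := dom_w v erefl; rewrite inE sym_e no_nbr orbF => /eqP.
by apply/forallP=> z; apply/implyP=> /eqP /dom_w; rewrite inE wv no_nbr orbF.
Qed.

Lemma dom_coloring_restrict : dom_coloring_map e' restrict_coloring.
Proof.
case: dom_f => proper_f dom_vertex dom_class.
have dom_sub w' y' : dominates_color e f (val w') (f (val y')) ->
    dominates_color e' restrict_coloring w' (restrict_coloring y').
  by move=> dom z' /restrict_coloring_eq /dom; rewrite cnbhd_del_vertex.
have dom_self y' : recolored (val y') ->
    dominates_color e' restrict_coloring y' (restrict_coloring y').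
  by move=> rec_y z' /(restrict_coloring_recolored rec_y) ->; rewrite inE eqxx.
split.
- move=> x' y' exy; apply: contraNneq (proper_f _ _ exy).
  by move/restrict_coloring_eq ->.
- move=> w'; have [y0 dom_y0] := dom_vertex (val w').
  case: (pickP (fun y' : T' => f (val y') == f y0)) => [y' /eqP fy'|no_y].
    by exists y'; apply: dom_sub; rewrite fy'.
  have only_v z : f z = f y0 -> z = v.
    move=> fz; case: (eq_or_val z) => [//|[z' eqz]].
    by move: (no_y z'); rewrite -eqz fz eqxx.
  have y0v := only_v y0 erefl; subst y0.
  have nbr_w : e v (val w').
    have := dom_y0 v erefl; rewrite inE sym_e => /orP [/eqP vw|//].
    by move: (valP w'); rewrite -vw eqxx.
  have single : v_class_singleton.
    by apply/forallP=> z; apply/implyP=> /eqP /only_v ->.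
  by exists w'; apply: dom_self; rewrite /recolored nbr_w single orbT.
- move=> y'; case rec_y: (recolored (val y')); first by exists y'; exact: dom_self.
  have [w] := dom_class (val y').
  case: (eq_or_val w) => [-> dom_v|[w' ->] dom_w]; last by exists w'; exact: dom_sub.
  (* only [v] dominates the class of [y'], which thus lies in N(v): [y'] was recolored *)
  have nbr_y : e v (val y').
    by have := dom_v _ erefl; rewrite inE (negbTE (valP y')).
  have class_y : class_in_nbhd (val y').
    apply/forallP=> z; apply/implyP=> /eqP fz; have := dom_v z fz.
    rewrite inE => /orP [/eqP zv|//].
    by move: (proper_f _ _ nbr_y); rewrite -fz zv eqxx.
  by move: rec_y; rewrite /recolored nbr_y class_y.
Qed.

Lemma vanishing_class_or_no_recoloring :
  (exists y, forall x, f x = f y -> (x == v) || recolored x) \/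
  ((forall x, ~~ recolored x) /\ 0 < deg e v).
Proof.
case single: v_class_singleton.
  by left; exists v => x fx; have := forallP single x; rewrite fx eqxx => /= ->.
have deg_v := deg_gt0_of_nonsingleton (negbT single).
case: (pickP recolored) => [y rec_y|none]; last by right; split=> // x; rewrite none.
left; exists y => x fx.
have class_y : class_in_nbhd y by move: rec_y; rewrite /recolored single orbF => /andP [].
have class_x : class_in_nbhd x by apply/forallP=> z; rewrite fx; exact: forallP class_y z.
have nbr_x : e v x by apply: (implyP (forallP class_y x)); rewrite fx.
by rewrite /recolored nbr_x class_x orbT.
Qed.

Lemma card_restrict_coloring :
  #|restrict_coloring @: [set: T']| <= #|f @: [set: T]| + deg e v - 1.
Proof.
set R := [set x | recolored x]; set kept := [set x | (x != v) && ~~ recolored x].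
have sub_img : restrict_coloring @: [set: T'] \subset inl @: R :|: inr @: (f @: kept).
  apply/subsetP=> _ /imsetP [y' _ ->]; rewrite /restrict_coloring in_setU.
  case: ifP => rec_y; first by rewrite imset_f ?inE.
  by rewrite orbC imset_f // imset_f // inE rec_y (valP y').
have card_img : #|restrict_coloring @: [set: T']| <= #|R| + #|f @: kept|.
  apply: leq_trans (subset_leq_card sub_img) _.
  by rewrite (leq_trans (leq_card_setU _ _)) // (card_imset _ inl_inj) (card_imset _ inr_inj).
have card_R : #|R| <= deg e v.
  by apply: subset_leq_card; apply/subsetP=> x; rewrite !inE => /andP [].
have kept_sub : f @: kept \subset f @: [set: T] by apply: imsetS; apply: subsetT.
case: vanishing_class_or_no_recoloring => [[y vanish] | [none deg_v]].
  have : #|f @: kept| < #|f @: [set: T]|.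
    apply: proper_card; apply/properP; split=> //; exists (f y); first by rewrite imset_f.
    apply/imsetP=> [[x]]; rewrite inE => /andP [neq_xv rec_x] /esym /vanish.
    by rewrite (negbTE neq_xv) (negbTE rec_x).
  lia.
have : #|R| = 0 by apply: eq_card0 => x; rewrite inE (negbTE (none x)).
have := subset_leq_card kept_sub; lia.
Qed.

End RestrictColoring.

Lemma chi_dd_del_vertex_le : simple_graph e -> chi_dd e' <= chi_dd e + deg e v - 1.
Proof.
case=> sym irr; have [f [dom_f ->]] := chi_dd_attained irr.
exact: leq_trans (chi_dd_le_colors (dom_coloring_restrict sym dom_f))
                 (card_restrict_coloring sym dom_f).
Qed.

End DeleteVertex.

Theorem theorem1 (T : finType) (e : rel T) (v : T) :
  simple_graph e -> connected_graph e -> ~ cut_vertex e v ->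
  chi_dd e - 1 <= chi_dd (@del_vertex T e v) <= chi_dd e + deg e v - 1.
Proof.
move=> simple_e _ _; have [_ irr] := simple_e.
apply/andP; split; last exact: chi_dd_del_vertex_le.
by rewrite leq_subLR add1n chi_dd_le_del_vertex_succ.
Qed.
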